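(* Let $A$ be a noetherian integral domain which is a $\mathbb{C}$-algebra, and let $a\in A$ be an irreducible element. If $A/aA$ is rigid, then the only locally nilpotent derivation $D$ of $A$ satisfying $D(a)=0$ is the zero derivation.
   Context: A locally nilpotent derivation (LND) of a $\mathbb{C}$-algebra is a $\mathbb{C}$-linear derivation $D$ such that every element is killed by some power of $D$. A ring is rigid if its only LND is zero. *)

From HB Require Import structures.
From mathcomp Require Import all_boot all_order all_algebra.
Set Implicit Arguments. Unset Strict Implicit. Unset Printing Implicit Defensive.
Import Order.TTheory GRing.Theory Num.Theory.
Local Open Scope ring_scope.

(* A k-algebra structure on a commutative ring R is given by a ring morphism
   iota : k -> R (the structure map).  A k-linear derivation of R: *)
Definition is_derivation (k : fieldType) (R : comPzRingType) (iota : k -> R)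
  (D : R -> R) : Prop :=
  [/\ forall x y, D (x + y) = D x + D y,
      forall (c : k) x, D (iota c * x) = iota c * D x
    & forall x y, D (x * y) = x * D y + D x * y].

Definition locally_nilpotent (R : comPzRingType) (D : R -> R) : Prop :=
  forall x, exists n : nat, iter n D x = 0.

Definition is_LND (k : fieldType) (R : comPzRingType) (iota : k -> R)
  (D : R -> R) : Prop :=
  is_derivation iota D /\ locally_nilpotent D.

Definition rigid (k : fieldType) (R : comPzRingType) (iota : k -> R) : Prop :=
  forall D : R -> R, is_LND iota D -> forall x, D x = 0.

Definition is_ideal (R : comPzRingType) (I : R -> Prop) : Prop :=
  [/\ I 0, forall x y, I x -> I y -> I (x + y)
    & forall r x, I x -> I (r * x)].

Definition noetherian (R : comPzRingType) : Prop :=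
  forall I : nat -> R -> Prop,
    (forall n, is_ideal (I n)) ->
    (forall n x, I n x -> I n.+1 x) ->
    exists N : nat, forall n x, (N <= n)%N -> I n x -> I N x.

Definition irreducible_elt (R : idomainType) (a : R) : Prop :=
  [/\ a != 0, a \isn't a GRing.unit
    & forall b c : R, a = b * c -> b \is a GRing.unit \/ c \is a GRing.unit].

From HB Require Import structures.
From mathcomp Require Import all_boot all_order all_algebra.
From Stdlib Require Import ClassicalEpsilon.
Set Implicit Arguments. Unset Strict Implicit. Unset Printing Implicit Defensive.
Import GRing.Theory Num.Theory.
Local Open Scope ring_scope.

(* Since D(a) = 0, D preserves aA and so induces an LND of A/aA, which is zero
   by rigidity: D(A) lies in aA.  Dividing by a yields an LND D' with D = aD'
   and D'(a) = 0, so iterating gives D(A) in a^n A for every n.  In a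
   noetherian domain only 0 is divisible by every power of a non-unit: the
   ascending chain of principal ideals generated by D(x)/a^n stabilises. *)

Section Derivation.
Variables (k : fieldType) (R : comPzRingType) (iota : k -> R) (D : R -> R).
Hypothesis D_der : is_derivation iota D.

Lemma derivationB x y : D (x - y) = D x - D y.
Proof. by case: D_der => DD _ _; apply: (addIr (D y)); rewrite -DD !subrK. Qed.

Lemma derivationMl_ker c x : D c = 0 -> D (c * x) = c * D x.
Proof. by case: D_der => _ _ DM Dc; rewrite DM Dc mul0r addr0. Qed.

Lemma derivation_exprMl_ker c n x : D c = 0 -> D (c ^+ n * x) = c ^+ n * D x.
Proof.
move=> Dc; elim: n x => [|n IHn] x; first by rewrite expr0 !mul1r.
by rewrite exprS -mulrA derivationMl_ker // IHn mulrA.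
Qed.

End Derivation.

Section QuotientDerivation.
Variables (k : fieldType) (A Q : comPzRingType) (iota : k -> A).
Variable pi : {rmorphism A -> Q}.
Hypothesis pi_surj : forall q : Q, exists x, pi x = q.
Variable D : A -> A.
Hypothesis D_LND : is_LND iota D.
Hypothesis D_ker : forall x, pi x = 0 -> pi (D x) = 0.

Lemma quotient_LND_exists :
  exists Dq : Q -> Q,
    is_LND (fun c => pi (iota c)) Dq /\ forall x, Dq (pi x) = pi (D x).
Proof.
have [D_der D_nil] := D_LND.
pose lift q := proj1_sig (constructive_indefinite_description _ (pi_surj q)).
have liftK q : pi (lift q) = q.
  by rewrite /lift; case: constructive_indefinite_description.
exists (fun q => pi (D (lift q))).
have Dq_pi x : pi (D (lift (pi x))) = pi (D x).
  apply/eqP; rewrite -subr_eq0 -rmorphB -(derivationB D_der).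
  by apply/eqP/D_ker; rewrite rmorphB liftK subrr.
split=> //; split.
- case: D_der => DD DZ DM; split.
  + move=> q1 q2; have [x1 <-] := pi_surj q1; have [x2 <-] := pi_surj q2.
    by rewrite -rmorphD !Dq_pi DD rmorphD.
  + move=> c q; have [x <-] := pi_surj q.
    by rewrite -rmorphM !Dq_pi DZ rmorphM.
  + move=> q1 q2; have [x1 <-] := pi_surj q1; have [x2 <-] := pi_surj q2.
    by rewrite -rmorphM !Dq_pi DM rmorphD !rmorphM.
- move=> q; have [x <-] := pi_surj q; have [n Dnx] := D_nil x.
  exists n; suff -> : forall m y, iter m (fun q => pi (D (lift q))) (pi y)
                                  = pi (iter m D y) by rewrite Dnx rmorph0.
  by elim=> [|m IHm] y //=; rewrite IHm Dq_pi.
Qed.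

Lemma rigid_quotient_ker :
  rigid (fun c => pi (iota c)) -> forall x, pi (D x) = 0.
Proof.
move=> Qrigid x; have [Dq [Dq_LND Dq_pi]] := quotient_LND_exists.
by rewrite -Dq_pi Qrigid.
Qed.

End QuotientDerivation.

Section DivideLND.
Variables (k : fieldType) (R : idomainType) (iota : k -> R) (a : R).
Hypothesis a_neq0 : a != 0.
Variable E : R -> R.
Hypothesis E_LND : is_LND iota E.
Hypothesis Ea : E a = 0.
Hypothesis E_div : forall x, exists y, E x = a * y.

Lemma LND_divide :
  exists E' : R -> R, [/\ is_LND iota E', E' a = 0 & forall x, E x = a * E' x].
Proof.
have [E_der E_nil] := E_LND.
pose E' x := proj1_sig (constructive_indefinite_description _ (E_div x)).
have EE' x : E x = a * E' x.
  by rewrite /E'; case: constructive_indefinite_description.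
have cancel_a := mulfI a_neq0.
have E'_der : is_derivation iota E'.
  case: E_der => ED EZ EM; split.
  - by move=> x y; apply: cancel_a; rewrite -EE' ED !EE' mulrDr.
  - by move=> c x; apply: cancel_a; rewrite -EE' EZ EE' mulrCA.
  - move=> x y; apply: cancel_a; rewrite -EE' EM !EE' mulrDr.
    by rewrite [x * (a * _)]mulrCA [a * (E' x * y)]mulrA.
have E'a : E' a = 0 by apply: cancel_a; rewrite -EE' Ea mulr0.
have iterE n x : iter n E x = a ^+ n * iter n E' x.
  elim: n x => [|n IHn] x /=; first by rewrite expr0 mul1r.
  by rewrite IHn EE' (derivation_exprMl_ker E'_der) // exprS mulrA.
exists E'; split=> //; split=> // x.
have [n Enx] := E_nil x; exists n.
by apply/eqP; move: Enx; rewrite iterE => /eqP; rewrite mulf_eq0 expf_eq0 (negbTE a_neq0) andbF.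
Qed.

End DivideLND.

Lemma noetherian_divisible_by_powers_eq0 (R : idomainType) (a y : R) :
  noetherian R -> a != 0 -> a \isn't a GRing.unit ->
  (forall n, exists z, y = a ^+ n * z) -> y = 0.
Proof.
move=> R_noeth a_neq0 a_nonunit y_div.
have quo_uniq n z z' : y = a ^+ n * z -> y = a ^+ n * z' -> z = z'.
  by move=> yz yz'; apply: (mulfI (expf_neq0 n a_neq0)); rewrite -yz -yz'.
pose I n t := exists z r, y = a ^+ n * z /\ t = r * z.
have [N I_stable] : exists N, forall n t, (N <= n)%N -> I n t -> I N t.
  apply: R_noeth => [n|n t [z [r [yz ->]]]].
  - split.
    + by have [z yz] := y_div n; exists z, 0; rewrite mul0r.
    + move=> t t' [z [r [yz ->]]] [z' [r' [yz' ->]]].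
      by rewrite -(quo_uniq _ _ _ yz yz'); exists z, (r + r'); rewrite mulrDl.
    + by move=> r t [z [r' [yz ->]]]; exists z, (r * r'); rewrite mulrA.
  - have [z' yz'] := y_div n.+1.
    have -> : z = a * z' by apply: (quo_uniq n) => //; rewrite yz' exprSr mulrA.
    by exists z', (r * a); rewrite mulrA.
have [z1 yz1] := y_div N.+1.
have [z [r [yz z1E]]] : I N z1.
  by apply: (I_stable N.+1) => //; exists z1, 1; rewrite mul1r.
have zE : z = a * z1 by apply: (quo_uniq N) => //; rewrite yz1 exprSr mulrA.
have /eqP : z1 * (1 - r * a) = 0.
  by rewrite mulrBr mulr1 mulrC -mulrA -zE -z1E subrr.
rewrite mulf_eq0 subr_eq0 => /orP [/eqP z1_0|/eqP ra1].
  by rewrite yz1 z1_0 mulr0.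
by case/negP: a_nonunit; apply/unitrP; exists r; rewrite [a * r]mulrC -ra1.
Qed.

Lemma rigid_quotient_LND_divisible_by_powers (k : fieldType) (A : idomainType)
    (iota : k -> A) (a : A) (Q : comPzRingType) (pi : {rmorphism A -> Q}) :
  a != 0 ->
  (forall q : Q, exists x, pi x = q) ->
  (forall x, pi x = 0 <-> exists y, x = a * y) ->
  rigid (fun c => pi (iota c)) ->
  forall D : A -> A, is_LND iota D -> D a = 0 ->
  forall x n, exists y, D x = a ^+ n * y.
Proof.
move=> a_neq0 pi_surj pi_ker Qrigid D D_LND Da x n.
suff [Dn [_ _ DE]] : exists Dn : A -> A,
    [/\ is_LND iota Dn, Dn a = 0 & forall x, D x = a ^+ n * Dn x].
  by exists (Dn x).
clear x; elim: n => [|n [Dn [Dn_LND Dna DE]]].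
  by exists D; split=> // x; rewrite expr0 mul1r.
have Dn_ker x : pi x = 0 -> pi (Dn x) = 0.
  case/pi_ker=> y ->; apply/pi_ker; exists (Dn y).
  by rewrite (derivationMl_ker Dn_LND.1).
have Dn_div x : exists y, Dn x = a * y.
  by apply/pi_ker; apply: rigid_quotient_ker Dn_LND Dn_ker Qrigid x.
have [D' [D'_LND D'a DnE]] := LND_divide a_neq0 Dn_LND Dna Dn_div.
by exists D'; split=> // x; rewrite DE DnE exprSr mulrA.
Qed.

Unset Implicit Arguments.

Theorem lemma7p1 (C : numClosedFieldType) (A : idomainType)
  (f : {rmorphism C -> A}) (a : A)
  (Q : comPzRingType) (pi : {rmorphism A -> Q}) :
  noetherian A ->
  irreducible_elt a ->
  (forall y : Q, exists x : A, pi x = y) ->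
  (forall x : A, pi x = 0 <-> exists y : A, x = a * y) ->
  rigid (fun c : C => pi (f c)) ->
  forall D : A -> A, is_LND f D -> D a = 0 -> forall x, D x = 0.
Proof.
move=> A_noeth [a_neq0 a_nonunit _] pi_surj pi_ker Qrigid D D_LND Da x.
apply: (noetherian_divisible_by_powers_eq0 A_noeth a_neq0 a_nonunit).
exact: (rigid_quotient_LND_divisible_by_powers a_neq0 pi_surj pi_ker Qrigid D_LND Da).
Qed.
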